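(* Let $m>n$ and let $\mathbf{A}\in\mathbb{R}^{m\times n}$ have rank $n$, partitioned by rows as $\mathbf{A} = \begin{bmatrix}\mathbf{X}\\ \mathbf{Y}\end{bmatrix}$ with $\mathbf{X}\in\mathbb{R}^{n\times n}$ invertible (the top $n$ rows form a full-rank square matrix) and $\mathbf{Y}\in\mathbb{R}^{(m-n)\times n}$. Let $\mathbf{A} = \mathbf{L}\mathbf{Q}$ be its LQ decomposition with $\mathbf{Q}\in\mathbb{R}^{n\times n}$ orthogonal and $\mathbf{L}\in\mathbb{R}^{m\times n}$ lower triangular, partitioned as $\mathbf{L} = \begin{bmatrix}\mathbf{U}\\ \mathbf{V}\end{bmatrix}$ with $\mathbf{U}\in\mathbb{R}^{n\times n}$ (lower triangular, invertible, $\mathbf{X} = \mathbf{U}\mathbf{Q}$) and $\mathbf{V}\in\mathbb{R}^{(m-n)\times n}$ ($\mathbf{Y} = \mathbf{V}\mathbf{Q}$). Suppose $\mathbf{A}'\mapsto(\mathbf{L}(\mathbf{A}'),\mathbf{Q}(\mathbf{A}'))$ is a differentiable map on a neighborhood of $\mathbf{A}$ giving such a decomposition for each $\mathbf{A}'$ (e.g. normalized so $\mathbf{L}$ has positive diagonal). Let $\bar{\mathbf{Q}}\in\mathbb{R}^{n\times n}$ and $\bar{\mathbf{L}} = \begin{bmatrix}\bar{\mathbf{U}}\\ \bar{\mathbf{V}}\end{bmatrix}\in\mathbb{R}^{m\times n}$ be arbitrary upstream gradients, with $\bar{\mathbf{U}}\in\mathbb{R}^{n\times n}$, $\bar{\mathbf{V}}\in\mathbb{R}^{(m-n)\times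 n}$. Then the reverse-mode gradient is $\bar{\mathbf{A}} = \begin{bmatrix}\bar{\mathbf{X}}\\ \bar{\mathbf{Y}}\end{bmatrix}$ with $$\bar{\mathbf{X}} = \mathbf{U}^{-T}\left[\bar{\mathbf{Q}}_{prime} + \mathrm{copyltu}(\mathbf{M})\mathbf{Q}\right],\qquad \bar{\mathbf{Y}} = \bar{\mathbf{V}}\mathbf{Q},$$ where $\bar{\mathbf{Q}}_{prime} = \bar{\mathbf{Q}} + \bar{\mathbf{V}}^T\mathbf{Y}$ and $\mathbf{M} = \mathbf{U}^T\bar{\mathbf{U}} - \bar{\mathbf{Q}}_{prime}\mathbf{Q}^T$.
   Context: Reverse-mode gradient: given a differentiable map $\mathbf{A}\mapsto(\mathbf{L}(\mathbf{A}),\mathbf{Q}(\mathbf{A}))$ and upstream matrices $\bar{\mathbf{L}},\bar{\mathbf{Q}}$ of the same shapes as $\mathbf{L},\mathbf{Q}$, the gradient $\bar{\mathbf{A}}$ is the unique matrix of the shape of $\mathbf{A}$ such that $\mathrm{Tr}(\bar{\mathbf{A}}^T d\mathbf{A}) = \mathrm{Tr}(\bar{\mathbf{L}}^T d\mathbf{L}) + \mathrm{Tr}(\bar{\mathbf{Q}}^T d\mathbf{Q})$ for every direction $d\mathbf{A}$, where $d\mathbf{L}, d\mathbf{Q}$ are the directional derivatives of $\mathbf{L},\mathbf{Q}$ at $\mathbf{A}$ in direction $d\mathbf{A}$. For a square matrix $\mathbf{M}$, $\mathrm{copyltu}(\mathbf{M})$ is the symmetric matrix with entries $\mathrm{copyltu}(\mathbf{M})_{ij}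 = \mathbf{M}_{\max(i,j),\min(i,j)}$; equivalently $\mathrm{copyltu}(\mathbf{M}) = \mathrm{sym}(\mathbf{M}\circ\mathbf{E})$, where $\mathrm{sym}(\mathbf{B}) = (\mathbf{B}+\mathbf{B}^T)/2$, $\circ$ is the Hadamard product and $\mathbf{E}$ has $e_{ij}=0$ if $i<j$, $1$ if $i=j$, $2$ if $i>j$. $\mathbf{U}^{-T} = (\mathbf{U}^{-1})^T$. *)

From HB Require Import structures.
From mathcomp Require Import all_boot all_order all_algebra.
From mathcomp Require Import all_classical all_reals all_analysis.
Set Implicit Arguments. Unset Strict Implicit. Unset Printing Implicit Defensive.
Import Order.TTheory GRing.Theory Num.Theory.
Import numFieldNormedType.Exports.
Local Open Scope ring_scope.

Definition copyltu {R : Type} {n : nat} (M : 'M[R]_n) : 'M[R]_n :=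
  \matrix_(i < n, j < n) (if (i < j)%N then M j i else M i j).

Definition lower_trig {R : ringType} {m n : nat} (L : 'M[R]_(m, n)) : Prop :=
  forall (i : 'I_m) (j : 'I_n), (i < j)%N -> L i j = 0.

Definition orthogonal_mx {R : ringType} {n : nat} (Q : 'M[R]_n) : Prop :=
  Q *m Q^T = 1%:M /\ Q^T *m Q = 1%:M.

Definition is_reverse_gradient {R : realType} {m n k l : nat}
  (Lf : 'M[R]_(m, n) -> 'M[R]_(k, l)) (Qf : 'M[R]_(m, n) -> 'M[R]_n)
  (A : 'M[R]_(m, n)) (Lbar : 'M[R]_(k, l)) (Qbar : 'M[R]_n)
  (Abar : 'M[R]_(m, n)) : Prop :=
  forall dA : 'M[R]_(m, n),
    \tr (Abar^T *m dA) = \tr (Lbar^T *m 'D_dA Lf A) + \tr (Qbar^T *m 'D_dA Qf A).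

From HB Require Import structures.
From mathcomp Require Import all_boot all_order all_algebra.
From mathcomp Require Import all_classical all_reals all_analysis.
From mathcomp Require Import ring.
Set Implicit Arguments. Unset Strict Implicit. Unset Printing Implicit Defensive.
Import Order.TTheory GRing.Theory Num.Theory.
Import numFieldNormedType.Exports.
Local Open Scope ring_scope.

(* Differentiating the three defining properties of the decomposition along
   a direction dA gives dA = dL Q + L dQ, a skew-symmetric C := dQ Q^T and a
   lower triangular dL.  Splitting dL = [dU; dV], the blocks of dA are
   dX = (dU + U C) Q and dY = (dV + V C) Q, so the claimed trace identity is
   purely algebraic in (dU, dV, C).  Its heart is the adjoint property of
   copyltu: for T lower triangular and C skew, tr(copyltu M (T + C)) equals
   tr(M^T T), because copyltu M is symmetric and agrees with M^T on the
   entries that are paired with the lower triangle of T.  With T = U^-1 dU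
   this settles the square block X; the rows Y only contribute symmetric
   terms (V^T Vbar + Vbar^T V) paired with C, which vanish. *)

Section TriangularAlgebra.
Variable R : fieldType.

Lemma lower_trig_mul m k n (A : 'M[R]_(m, k)) (B : 'M[R]_(k, n)) :
  lower_trig A -> lower_trig B -> lower_trig (A *m B).
Proof.
move=> lowA lowB i j ij; rewrite mxE big1 // => l _.
have [il|li] := ltnP i l; first by rewrite lowA // mul0r.
by rewrite lowB ?mulr0 // (leq_ltn_trans li ij).
Qed.

(* The inverse of an invertible lower triangular matrix is lower triangular:
   solve U * U^-1 = 1 row by row, by strong induction on the row index. *)
Lemma lower_trig_invmx n (U : 'M[R]_n) :
  lower_trig U -> U \in unitmx -> lower_trig (invmx U).
Proof.
move=> lowU unitU.
have diagU i : U i i != 0.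
  move: unitU; rewrite unitmxE unitfE det_trig; last exact/is_trig_mxP.
  by apply: contra => /eqP Uii0; rewrite (bigD1 i) //= Uii0 mul0r.
suff low_rows k (i j : 'I_n) : val i = k -> (i < j)%N -> invmx U i j = 0.
  by move=> i j; apply: low_rows.
elim/ltn_ind: k i j => k IH i j ik ij.
have := congr1 (fun N : 'M[R]_n => N i j) (mulmxV unitU).
rewrite !mxE (bigD1 i) //= big1 => [|l li].
  rewrite addr0 -(inj_eq val_inj) (ltn_eqF ij) /= => /eqP.
  by rewrite mulf_eq0 (negbTE (diagU i)) => /eqP.
have [il|li'|il] := ltngtP i l.
- by rewrite lowU ?mul0r.
- by rewrite (IH l) ?mulr0 -?ik // (ltn_trans li' ij).
- by move: li; rewrite -(inj_eq val_inj) /= il eqxx.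
Qed.

End TriangularAlgebra.

Section TraceAlgebra.
Variable R : numFieldType.

Lemma copyltu_sym n (M : 'M[R]_n) : (copyltu M)^T = copyltu M.
Proof.
apply/matrixP => i j; rewrite !mxE.
by have [||/val_inj->] := ltngtP i j.
Qed.

Lemma mxtrace_sym_skew n (B C : 'M[R]_n) :
  B^T = B -> C^T = - C -> \tr (B *m C) = 0.
Proof.
move=> symB skewC; set t := \tr _.
have tN : t = - t.
  by rewrite /t -{1}mxtrace_tr trmx_mul symB skewC mulNmx raddfN mxtrace_mulC.
have : t *+ 2 = 0 by rewrite mulr2n {1}tN addNr.
by move/eqP; rewrite mulrn_eq0 => /eqP.
Qed.

Lemma mxtrace_copyltu_lower n (M T : 'M[R]_n) :
  lower_trig T -> \tr (copyltu M *m T) = \tr (M^T *m T).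
Proof.
move=> lowT; rewrite /mxtrace; apply: eq_bigr => i _; rewrite !mxE.
apply: eq_bigr => k _; rewrite !mxE.
have [ki|ik] := ltnP k i; first by rewrite lowT ?mulr0.
by case: ltngtP ik => // /val_inj->.
Qed.

Lemma mxtrace_copyltu n (M T C : 'M[R]_n) :
  lower_trig T -> C^T = - C -> \tr (copyltu M *m (T + C)) = \tr (M^T *m T).
Proof.
move=> lowT skewC.
by rewrite mulmxDr mxtraceD (mxtrace_sym_skew (copyltu_sym M) skewC) addr0
  mxtrace_copyltu_lower.
Qed.

Lemma lq_square_gradient n (U Q dU C G Ubar : 'M[R]_n) :
  Q *m Q^T = 1%:M -> lower_trig U -> U \in unitmx ->
  lower_trig dU -> C^T = - C ->
  let M := U^T *m Ubar - G *m Q^T in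
  let Xbar := (invmx U)^T *m (G + copyltu M *m Q) in
  \tr (Xbar^T *m ((dU + U *m C) *m Q)) =
    \tr (Ubar^T *m dU) + \tr (Q *m G^T *m C).
Proof.
move=> QQt lowU unitU lowdU skewC M Xbar.
set T := invmx U *m dU.
have lowT : lower_trig T.
  by apply: lower_trig_mul => //; apply: lower_trig_invmx.
have UT : U *m T = dU by rewrite /T mulKVmx.
have -> : \tr (Xbar^T *m ((dU + U *m C) *m Q)) =
          \tr ((Q *m G^T + copyltu M) *m (T + C)).
  have dXW : invmx U *m (dU + U *m C) = T + C by rewrite mulmxDr mulKmx.
  have QK : Q *m (G^T + Q^T *m copyltu M) = Q *m G^T + copyltu M.
    by rewrite mulmxDr mulmxA QQt mul1mx.
  rewrite /Xbar trmx_mul trmxK linearD /= trmx_mul copyltu_sym.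
  by rewrite mxtrace_mulC -mulmxA mxtrace_mulC !mulmxA QK -mulmxA dXW.
have MT : M^T = Ubar^T *m U - Q *m G^T.
  by rewrite /M linearB /= !trmx_mul !trmxK.
rewrite mulmxDl mxtraceD mxtrace_copyltu // MT mulmxBl raddfB /=.
rewrite -[Ubar^T *m U *m T]mulmxA UT.
by rewrite mulmxDr mxtraceD addrC addrA subrK.
Qed.

Lemma lq_gradient_identity n p (X : 'M[R]_n) (Y : 'M[R]_(p, n))
  (L dL dA : 'M[R]_(n + p, n)) (Q dQ Qbar Ubar : 'M[R]_n)
  (Vbar : 'M[R]_(p, n)) :
  Q *m Q^T = 1%:M -> Q^T *m Q = 1%:M -> col_mx X Y = L *m Q -> lower_trig L ->
  X \in unitmx ->
  dA = dL *m Q + L *m dQ -> dQ *m Q^T + Q *m dQ^T = 0 -> lower_trig dL ->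
  let U := usubmx L in
  let Qbar' := Qbar + Vbar^T *m Y in
  let M := U^T *m Ubar - Qbar' *m Q^T in
  let Xbar := (invmx U)^T *m (Qbar' + copyltu M *m Q) in
  let Ybar := Vbar *m Q in
  \tr ((col_mx Xbar Ybar)^T *m dA) =
    \tr ((col_mx Ubar Vbar)^T *m dL) + \tr (Qbar^T *m dQ).
Proof.
move=> QQt QtQ defA lowL unitX defdA orth_dQ lowdL U Qb' M Xbar Ybar.
set V := dsubmx L; set dU := usubmx dL; set dV := dsubmx dL.
set C := dQ *m Q^T.
have [defX defY] : X = U *m Q /\ Y = V *m Q.
  by apply/eq_col_mx; rewrite -mul_col_mx vsubmxK.
have unitU : U \in unitmx by move: unitX; rewrite defX unitmx_mul => /andP[].
have lowU : lower_trig U by move=> i j ij; rewrite mxE lowL.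
have lowdU : lower_trig dU by move=> i j ij; rewrite mxE lowdL.
have skewC : C^T = - C.
  rewrite /C trmx_mul trmxK; apply/eqP.
  by rewrite -subr_eq0 opprK addrC orth_dQ.
have defdQ : dQ = C *m Q by rewrite /C -mulmxA QtQ mulmx1.
clearbody C.
have blocks_dA : dA = col_mx ((dU + U *m C) *m Q) ((dV + V *m C) *m Q).
  rewrite defdA defdQ -(vsubmxK dL) -(vsubmxK L) -/dU -/dV -/U -/V.
  by rewrite mul_col_mx mul_col_mx add_col_mx !mulmxA -!mulmxDl.
have gradY : \tr (Ybar^T *m ((dV + V *m C) *m Q)) =
             \tr (Vbar^T *m dV) + \tr (Vbar^T *m V *m C).
  rewrite /Ybar trmx_mul mxtrace_mulC mulmxA -[_ *m Q *m Q^T]mulmxA QQt mulmx1.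
  by rewrite mxtrace_mulC mulmxDr mxtraceD mulmxA.
have rotY : \tr (Q *m (Vbar^T *m Y)^T *m C) + \tr (Vbar^T *m V *m C) = 0.
  have -> : Q *m (Vbar^T *m Y)^T = V^T *m Vbar.
    by rewrite defY !trmx_mul trmxK !mulmxA QQt mul1mx.
  rewrite -mxtraceD -mulmxDl; apply: mxtrace_sym_skew skewC.
  by rewrite linearD /= !trmx_mul !trmxK addrC.
have rotX : \tr (Q *m Qb'^T *m C) =
            \tr (Qbar^T *m dQ) + \tr (Q *m (Vbar^T *m Y)^T *m C).
  rewrite defdQ mulmxA [in RHS]mxtrace_mulC mulmxA.
  by rewrite /Qb' linearD /= mulmxDr mulmxDl mxtraceD.
rewrite blocks_dA -(vsubmxK dL) -/dU -/dV !tr_col_mx !mul_row_col !mxtraceD.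
rewrite lq_square_gradient // gradY rotX.
by move/eqP: rotY; rewrite addr_eq0 => /eqP ->; ring.
Qed.

End TraceAlgebra.

Section MatrixCalculus.
Context {R : realFieldType} {V : normedModType R}.

Lemma derive_mxE m n (F : V -> 'M[R]_(m, n)) a v i j :
  derivable F a v -> ('D_v F a) i j = 'D_v (fun x => F x i j) a.
Proof. by move=> dF; rewrite derive_mx // mxE. Qed.

Lemma mulmx_entry_fun m k n (F : V -> 'M[R]_(m, k)) (G : V -> 'M[R]_(k, n))
  i j :
  (fun x => (F x *m G x) i j) =
  \sum_(l < k) ((fun x => F x i l) * (fun x => G x l j)).
Proof. by rewrite fct_sumE; apply/funext => x; rewrite mxE. Qed.

Lemma derivable_mulmx m k n (F : V -> 'M[R]_(m, k)) (G : V -> 'M[R]_(k, n))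
  a v :
  derivable F a v -> derivable G a v -> derivable (fun x => F x *m G x) a v.
Proof.
move=> /derivable_mxP dF /derivable_mxP dG; apply/derivable_mxP => i j.
by rewrite mulmx_entry_fun; apply: derivable_sum => l; apply: derivableM.
Qed.

Lemma derive_mulmx m k n (F : V -> 'M[R]_(m, k)) (G : V -> 'M[R]_(k, n))
  a v :
  derivable F a v -> derivable G a v ->
  'D_v (fun x => F x *m G x) a = 'D_v F a *m G a + F a *m 'D_v G a.
Proof.
move=> dF dG; apply/matrixP => i j.
have [dFij dGij] := ((derivable_mxP F a v).1 dF, (derivable_mxP G a v).1 dG).
rewrite derive_mxE ?mulmx_entry_fun; last exact: derivable_mulmx.
rewrite derive_sum => [|l]; last first.
  by apply: derivableM; [exact: dFij|exact: dGij].
rewrite !mxE -big_split; apply: eq_bigr => l _ /=.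
rewrite deriveM; [|exact: dFij|exact: dGij].
by rewrite !derive_mxE // /GRing.scale /= addrC mulrC [X in _ + X]mulrC.
Qed.

Lemma derivable_trmx m n (F : V -> 'M[R]_(m, n)) a v :
  derivable F a v -> derivable (fun x => (F x)^T) a v.
Proof.
move=> /derivable_mxP dF; apply/derivable_mxP => i j.
rewrite (_ : (fun x => _) = fun x => F x j i) //.
by apply/funext => x; rewrite mxE.
Qed.

Lemma derive_trmx m n (F : V -> 'M[R]_(m, n)) a v :
  derivable F a v -> 'D_v (fun x => (F x)^T) a = ('D_v F a)^T.
Proof.
move=> dF; apply/matrixP => i j.
rewrite mxE !derive_mxE //; last exact: derivable_trmx.
by congr ('D_v _ a); apply/funext => x; rewrite mxE.
Qed.

Lemma derive_near_lower_trig m n (F : V -> 'M[R]_(m, n)) a v :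
  (\forall x \near a, lower_trig (F x)) -> derivable F a v ->
  lower_trig ('D_v F a).
Proof.
move=> lowF dF i j ij; rewrite derive_mxE // (@near_eq_derive _ _ _ _ (cst 0)).
  by rewrite derive_cst.
by apply: filterS lowF => x lowFx; rewrite lowFx.
Qed.

Lemma derive_near_coisometry n (F : V -> 'M[R]_n) a v :
  (\forall x \near a, F x *m (F x)^T = 1%:M) -> derivable F a v ->
  'D_v F a *m (F a)^T + F a *m ('D_v F a)^T = 0.
Proof.
move=> orthF dF.
rewrite -derive_trmx // -derive_mulmx //; last exact: derivable_trmx.
by rewrite (@near_eq_derive _ _ _ _ (cst 1%:M)) ?derive_cst.
Qed.

End MatrixCalculus.

(* The tall matrix A = [X; Y] has m = n + p rows, p > 0.  The rank and
   p > 0 hypotheses are part of the setting but not needed: invertibility of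
   X already forces that of U. *)
Theorem proposition3 (R : realType) (n p : nat) (hp : (0 < p)%N)
  (X : 'M[R]_n) (Y : 'M[R]_(p, n))
  (hrank : \rank (col_mx X Y) = n)
  (hX : X \in unitmx)
  (Lf : 'M[R]_(n + p, n) -> 'M[R]_(n + p, n))
  (Qf : 'M[R]_(n + p, n) -> 'M[R]_n)
  (hdec : \forall A' \near col_mx X Y,
            [/\ A' = Lf A' *m Qf A', orthogonal_mx (Qf A'), lower_trig (Lf A'),
                differentiable Lf A' & differentiable Qf A'])
  (Qbar : 'M[R]_n) (Ubar : 'M[R]_n) (Vbar : 'M[R]_(p, n)) :
  let A := col_mx X Y in
  let L := Lf A in
  let Q := Qf A in
  let U := usubmx L in
  let Qbar' := Qbar + Vbar^T *m Y in
  let M := U^T *m Ubar - Qbar' *m Q^T in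
  let Xbar := (invmx U)^T *m (Qbar' + copyltu M *m Q) in
  let Ybar := Vbar *m Q in
  is_reverse_gradient Lf Qf A (col_mx Ubar Vbar) Qbar (col_mx Xbar Ybar).
Proof.
move=> A L Q U Qb' M Xbar Ybar dA.
have [defA [QQt QtQ] lowL diffL diffQ] := nbhs_singleton hdec.
have dL : derivable Lf A dA := diff_derivable diffL.
have dQ : derivable Qf A dA := diff_derivable diffQ.
have tangent_A : dA = 'D_dA Lf A *m Q + L *m 'D_dA Qf A.
  rewrite -derive_mulmx // -{1}(derive_id A dA); apply: near_eq_derive.
  by apply: filterS hdec => x [].
have tangent_Q : 'D_dA Qf A *m Q^T + Q *m ('D_dA Qf A)^T = 0.
  by apply: derive_near_coisometry dQ; apply: filterS hdec => x [_ []].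
have tangent_L : lower_trig ('D_dA Lf A).
  by apply: derive_near_lower_trig dL; apply: filterS hdec => x [].
exact: lq_gradient_identity QQt QtQ defA lowL hX tangent_A tangent_Q tangent_L.
Qed.
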